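(* Let $S$ be a complete starsemiring, let $n\ge 1$, let $\Gamma$ be an alphabet, and let $M\in (S^{n\times n})^{\Gamma^*\times\Gamma^*}$ be a pushdown transition matrix. Then for all $p\in\Gamma$ and $\pi\in\Gamma^*$, $$(M^* )_{p\pi,\epsilon}=(M^* )_{p,\epsilon}\,(M^* )_{\pi,\epsilon}.$$
   Context: A complete starsemiring is a semiring $S$ in which sums $\sum_{i\in I}s_i$ of arbitrary families (arbitrary index sets $I$) are defined, extending finite sums and satisfying the usual infinite associativity, commutativity and distributivity laws, and which is equipped with the star operation $s^*=\sum_{j\ge 0}s^j$. Matrices over $S$ (also with infinite index sets) are added and multiplied by the usual formulas, using these infinite sums. An element $M\in (S^{n\times n})^{\Gamma^*\times\Gamma^*}$ is a $\Gamma^*\times\Gamma^*$ matrix whose blocks $M_{\pi_1,\pi_2}$ are $n\times n$ matrices over $S$. Such an $M$ is a pushdown transition matrix if (i) for each $p\in\Gamma$ only finitely many blocks $M_{p,\pi}$, $\pi\in\Gamma^*$, are nonzero, and (ii) for all $\pi_1,\pi_2\in\Gamma^*$: $M_{\pi_1,\pi_2}=M_{p,\pi}$ if there are $p\in\Gamma$, $\pi,\pi'\in\Gamma^*$ with $\pi_1=p\pi'$ and $\pi_2=\pi\pi'$, and $M_{\pi_1,\pi_2}=0$ otherwise. $M^*=\sum_{m\ge0}M^m$, and $(M^* )_{\pi,\pi'}$ denotes its $(\pi,\pi')$-block, an $n\times n$ matrix; $\epsilon$ is the empty word. *)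

From HB Require Import structures.
From mathcomp Require Import all_boot all_order all_algebra.
Set Implicit Arguments. Unset Strict Implicit. Unset Printing Implicit Defensive.
Import GRing.Theory.
Local Open Scope ring_scope.

(* A complete semiring: a semiring S with sums [csum I a] of arbitrary families
   a : I -> S (I an arbitrary type), satisfying Kuich's axioms: empty sums are 0,
   one- and two-element sums agree with the semiring's finite sums, infinite
   associativity/commutativity over arbitrary partitions (a partition of I into
   blocks indexed by J is given by a map f : I -> J, block j = {i | f i = j}),
   and infinite distributivity on both sides. *)
Record complete_sum (S : pzSemiRingType) := CompleteSum {
  csum : forall I : Type, (I -> S) -> S;
  csum_empty : forall (I : Type) (a : I -> S), (I -> False) -> csum a = 0;
  csum_single : forall (I : Type) (a : I -> S) (j : I),
      (forall i, i = j) -> csum a = a j;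
  csum_pair : forall (I : Type) (a : I -> S) (j k : I), j <> k ->
      (forall i, i = j \/ i = k) -> csum a = a j + a k;
  csum_partition : forall (I J : Type) (f : I -> J) (a : I -> S),
      csum (fun j : J => csum (fun i : {i : I | f i = j} => a (proj1_sig i)))
      = csum a;
  csum_distrl : forall (I : Type) (c : S) (a : I -> S),
      csum (fun i => c * a i) = c * csum a;
  csum_distrr : forall (I : Type) (c : S) (a : I -> S),
      csum (fun i => a i * c) = csum a * c
}.
Arguments csum {S} _ {I} _.

Definition cstar (S : pzSemiRingType) (cs : complete_sum S) (s : S) : S :=
  csum cs (fun j : nat => s ^+ j).

Definition bmat (S : pzSemiRingType) (Gamma : finType) (n : nat) :=
  seq Gamma -> seq Gamma -> 'M[S]_n.

Section BlockMatrices.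
Variables (S : pzSemiRingType) (cs : complete_sum S) (Gamma : finType) (n : nat).

Definition mxcsum (I : Type) (A : I -> 'M[S]_n) : 'M[S]_n :=
  \matrix_(k < n, l < n) csum cs (fun i : I => A i k l).

Definition bmul (A B : bmat S Gamma n) : bmat S Gamma n :=
  fun p1 p2 => mxcsum (fun p : seq Gamma => A p1 p *m B p p2).

Definition bone : bmat S Gamma n :=
  fun p1 p2 => if p1 == p2 then 1%:M else 0.

Fixpoint bpow (M : bmat S Gamma n) (m : nat) : bmat S Gamma n :=
  match m with
  | 0 => bone
  | m'.+1 => bmul (bpow M m') M
  end.

Definition bstar (M : bmat S Gamma n) : bmat S Gamma n :=
  fun p1 p2 => mxcsum (fun m : nat => bpow M m p1 p2).

Definition pushdown_transition_matrix (M : bmat S Gamma n) : Prop :=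
  (forall p : Gamma, exists l : seq (seq Gamma),
      forall pi : seq Gamma, M [:: p] pi <> 0 -> pi \in l)
  /\
  (forall p1 p2 : seq Gamma,
      (forall (p : Gamma) (pi pi' : seq Gamma),
          p1 = p :: pi' -> p2 = pi ++ pi' -> M p1 p2 = M [:: p] pi)
      /\
      ((~ exists (p : Gamma) (pi pi' : seq Gamma),
           p1 = p :: pi' /\ p2 = pi ++ pi') -> M p1 p2 = 0)).

End BlockMatrices.

From HB Require Import structures.
From mathcomp Require Import all_boot all_order all_algebra.
From Stdlib Require Import FunctionalExtensionality ProofIrrelevance ClassicalEpsilon.
Set Implicit Arguments. Unset Strict Implicit. Unset Printing Implicit Defensive.
Import GRing.Theory.
Local Open Scope ring_scope.

(* A single step of a pushdown transition matrix from a stack [q :: r] only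
   reads [q] and leaves [r] untouched.  Hence, by induction on [m], a path of
   length [m] from [w ++ pi] down to the empty stack is a path of length [i]
   emptying [w] followed by one of length [j] emptying [pi], with [i + j = m]:
   (M^m)_{w pi, eps} is the Cauchy product of the sequences (M^i)_{w, eps} and
   (M^j)_{pi, eps}.  Summing over [m], infinite associativity (the partition
   axiom, along the fibres of [(i, j) |-> i + j]) and distributivity turn the
   Cauchy product of the two series into the product of their sums. *)

Section CompleteSums.
Variables (S : pzSemiRingType) (cs : complete_sum S).
Implicit Types I J K : Type.

Lemma eq_csum I (a b : I -> S) : (forall i, a i = b i) -> csum cs a = csum cs b.
Proof. by move=> eq_ab; rewrite (functional_extensionality _ _ eq_ab). Qed.

Lemma csum0 I : csum cs (fun _ : I => 0) = 0.
Proof.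
rewrite -[RHS](mul0r (csum cs (fun _ : I => 0 : S))) -csum_distrl.
by apply: eq_csum => _; rewrite mul0r.
Qed.

Lemma csum_reindex I J (e : I -> J) (a : J -> S) :
  injective e -> (forall j, exists i, e i = j) ->
  csum cs (fun i => a (e i)) = csum cs a.
Proof.
move=> e_inj e_surj; rewrite -(csum_partition cs e); apply: eq_csum => j.
have [i0 ei0] := e_surj j.
rewrite (@csum_single _ _ _ _ (exist (fun i => e i = j) i0 ei0)) /= ?ei0 // => -[i ei].
have ? : i = i0 by apply: e_inj; rewrite ei ei0.
by subst i; congr exist; apply: proof_irrelevance.
Qed.

Lemma csum_bool (a : bool -> S) : csum cs a = a true + a false.
Proof. by apply: csum_pair => // -[]; auto. Qed.

Lemma csum_restrict I K (e : K -> I) (a : I -> S) :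
  injective e -> (forall i, (forall k, e k <> i) -> a i = 0) ->
  csum cs a = csum cs (fun k => a (e k)).
Proof.
move=> e_inj a_supp.
pose inim i : bool := excluded_middle_informative (exists k, e k = i).
have inimP i : reflect (exists k, e k = i) (inim i).
  by rewrite /inim; case: excluded_middle_informative => h; constructor.
rewrite -(csum_partition cs inim) csum_bool.
have -> : csum cs (fun x : {i | inim i = false} => a (sval x)) = 0.
  rewrite -(csum0 {i | inim i = false}); apply: eq_csum => -[i /= /inimP not_im].
  by apply: a_supp => k ek; apply: not_im; exists k.
have inim_e k : inim (e k) = true by apply/inimP; exists k.
rewrite addr0 -(csum_reindex (e := fun k => exist _ (e k) (inim_e k))) //.
- by move=> k1 k2 [] /e_inj.
- case=> i im_i; have /inimP [k ek] := im_i; exists k; subst i.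
  by congr exist; apply: proof_irrelevance.
Qed.

Lemma pair_csum I J (a : I * J -> S) :
  csum cs a = csum cs (fun i => csum cs (fun j => a (i, j))).
Proof.
rewrite -(csum_partition cs fst); apply: eq_csum => i.
rewrite -(csum_reindex (e := fun j => exist (fun x : I * J => x.1 = i) (i, j) erefl)) //.
- by move=> j1 j2 [].
- by case=> -[i' j] /= ?; subst i'; exists j.
Qed.

Lemma exchange_csum I J (a : I -> J -> S) :
  csum cs (fun i => csum cs (fun j => a i j))
  = csum cs (fun j => csum cs (fun i => a i j)).
Proof.
rewrite -(pair_csum (fun x => a x.1 x.2)) -(pair_csum (fun y => a y.2 y.1)).
rewrite -(csum_reindex (e := fun y : J * I => (y.2, y.1))) //.
- by move=> [j1 i1] [j2 i2] [-> ->].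
- by move=> [i j]; exists (j, i).
Qed.

Lemma csumD I (a b : I -> S) :
  csum cs (fun i => a i + b i) = csum cs a + csum cs b.
Proof.
transitivity (csum cs (fun i => csum cs (fun x : bool => if x then a i else b i))).
  by apply: eq_csum => i; rewrite csum_bool.
by rewrite exchange_csum csum_bool.
Qed.

Lemma exchange_csum_big I m (a : I -> 'I_m -> S) :
  csum cs (fun i => \sum_(j < m) a i j) = \sum_(j < m) csum cs (fun i => a i j).
Proof.
elim: m a => [|m IHm] a.
  by rewrite big_ord0 -[RHS](csum0 I); apply: eq_csum => i; rewrite big_ord0.
rewrite big_ord_recr /= -(IHm (fun i j => a i (widen_ord (leqnSn m) j))) -csumD.
by apply: eq_csum => i; rewrite big_ord_recr.
Qed.

End CompleteSums.

Section MatrixSums.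
Variables (S : pzSemiRingType) (cs : complete_sum S) (n : nat).
Implicit Types I J K : Type.

Lemma eq_mxcsum I (A B : I -> 'M[S]_n) :
  (forall i, A i = B i) -> mxcsum cs A = mxcsum cs B.
Proof. by move=> eq_AB; rewrite (functional_extensionality _ _ eq_AB). Qed.

Lemma mxcsum0 I : mxcsum cs (fun _ : I => 0 : 'M[S]_n) = 0.
Proof. by apply/matrixP => k l; rewrite !mxE -[RHS](csum0 cs I). Qed.

Lemma mxcsum_single I (A : I -> 'M[S]_n) j :
  (forall i, i = j) -> mxcsum cs A = A j.
Proof. by move=> I_j; apply/matrixP => k l; rewrite mxE (csum_single _ _ I_j). Qed.

Lemma mxcsum_restrict I K (e : K -> I) (A : I -> 'M[S]_n) :
  injective e -> (forall i, (forall k, e k <> i) -> A i = 0) ->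
  mxcsum cs A = mxcsum cs (fun k => A (e k)).
Proof.
move=> e_inj A_supp; apply/matrixP => k l; rewrite !mxE.
apply: (csum_restrict cs (a := fun i => A i k l) e_inj) => i not_im.
by rewrite A_supp // mxE.
Qed.

Lemma mxcsum_partition I J (f : I -> J) (A : I -> 'M[S]_n) :
  mxcsum cs (fun j => mxcsum cs (fun x : {i | f i = j} => A (sval x)))
  = mxcsum cs A.
Proof.
apply/matrixP => k l; rewrite !mxE -(csum_partition cs f).
by apply: eq_csum => j; rewrite mxE.
Qed.

Lemma pair_mxcsum I J (A : I * J -> 'M[S]_n) :
  mxcsum cs A = mxcsum cs (fun i => mxcsum cs (fun j => A (i, j))).
Proof.
apply/matrixP => k l; rewrite !mxE pair_csum.
by apply: eq_csum => i; rewrite mxE.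
Qed.

Lemma exchange_mxcsum I J (A : I -> J -> 'M[S]_n) :
  mxcsum cs (fun i => mxcsum cs (fun j => A i j))
  = mxcsum cs (fun j => mxcsum cs (fun i => A i j)).
Proof.
apply/matrixP => k l; rewrite !mxE.
transitivity (csum cs (fun i => csum cs (fun j => A i j k l))).
  by apply: eq_csum => i; rewrite mxE.
by rewrite exchange_csum; apply: eq_csum => j; rewrite mxE.
Qed.

Lemma mulmx_mxcsumr I (C : 'M[S]_n) (A : I -> 'M[S]_n) :
  C *m mxcsum cs A = mxcsum cs (fun i => C *m A i).
Proof.
apply/matrixP => k l; rewrite !mxE.
transitivity (csum cs (fun i => \sum_(j < n) C k j * A i j l)); last first.
  by apply: eq_csum => i; rewrite mxE.
rewrite exchange_csum_big; apply: eq_bigr => j _.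
by rewrite mxE csum_distrl.
Qed.

Lemma mulmx_mxcsuml I (C : 'M[S]_n) (A : I -> 'M[S]_n) :
  mxcsum cs A *m C = mxcsum cs (fun i => A i *m C).
Proof.
apply/matrixP => k l; rewrite !mxE.
transitivity (csum cs (fun i => \sum_(j < n) A i k j * C j l)); last first.
  by apply: eq_csum => i; rewrite mxE.
rewrite exchange_csum_big; apply: eq_bigr => j _.
by rewrite mxE csum_distrr.
Qed.

Lemma mxcsum_supp1 I (A : I -> 'M[S]_n) j :
  (forall i, i <> j -> A i = 0) -> mxcsum cs A = A j.
Proof.
move=> A_supp; rewrite (mxcsum_restrict (e := fun _ : unit => j)) => [||i not_j].
- by rewrite (mxcsum_single _ (j := tt)) // => -[].
- by move=> [] [].
- by apply: A_supp => ei; apply: (not_j tt).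
Qed.

(* Prop-valued, so that the fibres in [csum_partition] are literally antidiagonals. *)
Definition antidiagonal (m : nat) := {ij : nat * nat | ij.1 + ij.2 = m}.

Definition cauchy_product (A B : nat -> 'M[S]_n) (m : nat) : 'M[S]_n :=
  mxcsum cs (fun x : antidiagonal m => A (sval x).1 *m B (sval x).2).

Lemma mxcsum_cauchy_product (A B : nat -> 'M[S]_n) :
  mxcsum cs (cauchy_product A B) = mxcsum cs A *m mxcsum cs B.
Proof.
transitivity (mxcsum cs (fun ij : nat * nat => A ij.1 *m B ij.2)).
  exact: (mxcsum_partition (fun ij : nat * nat => ij.1 + ij.2)).
rewrite pair_mxcsum mulmx_mxcsuml; apply: eq_mxcsum => i.
by rewrite mulmx_mxcsumr.
Qed.

Lemma cauchy_product0 (A B : nat -> 'M[S]_n) :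
  cauchy_product A B 0 = A 0%N *m B 0%N.
Proof.
rewrite /cauchy_product (mxcsum_supp1 (j := exist _ (0, 0)%N erefl : antidiagonal 0)) //.
move=> [[i j] /= ij0]; have /eqP := ij0; rewrite addn_eq0 => /andP[/eqP ei /eqP ej].
by subst i j; case; congr exist; apply: eq_irrelevance.
Qed.

Lemma cauchy_productCl (A B : nat -> 'M[S]_n) m :
  (forall i, A i.+1 = 0) -> cauchy_product A B m = A 0%N *m B m.
Proof.
move=> A_supp; rewrite /cauchy_product.
rewrite (mxcsum_supp1 (j := exist _ (0, m)%N (add0n m) : antidiagonal m)) //.
move=> [[[|i] j] /= ij_m] not_0m; last by rewrite A_supp mul0mx.
have ej : j = m by rewrite -ij_m.
by subst j; case: not_0m; congr exist; apply: eq_irrelevance.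
Qed.

Lemma cauchy_productSl (A B : nat -> 'M[S]_n) m :
  A 0%N = 0 -> cauchy_product A B m.+1 = cauchy_product (fun i => A i.+1) B m.
Proof.
move=> A0; rewrite /cauchy_product.
pose succl (x : antidiagonal m) : antidiagonal m.+1 :=
  exist _ ((sval x).1.+1, (sval x).2) (congr1 succn (svalP x)).
rewrite (mxcsum_restrict (e := succl)) //.
- move=> [[i j] ij_m] [[i' j'] ij_m'] [ei ej]; subst i' j'.
  by congr exist; apply: eq_irrelevance.
- move=> [[[|i] j] /= ij_m] not_succl; first by rewrite A0 mul0mx.
  case: (not_succl (exist _ (i, j) (succn_inj ij_m))).
  by congr exist; apply: eq_irrelevance.
Qed.

Lemma cauchy_product_mulmxl (C : 'M[S]_n) (A B : nat -> 'M[S]_n) m :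
  cauchy_product (fun i => C *m A i) B m = C *m cauchy_product A B m.
Proof.
by rewrite /cauchy_product mulmx_mxcsumr; apply: eq_mxcsum => x; rewrite mulmxA.
Qed.

Lemma cauchy_product_mxcsuml I (A : I -> nat -> 'M[S]_n) (B : nat -> 'M[S]_n) m :
  cauchy_product (fun i => mxcsum cs (fun a => A a i)) B m
  = mxcsum cs (fun a => cauchy_product (A a) B m).
Proof.
rewrite /cauchy_product -exchange_mxcsum; apply: eq_mxcsum => x.
exact: mulmx_mxcsuml.
Qed.

End MatrixSums.

Section BlockMatrixAlgebra.
Variables (S : pzSemiRingType) (cs : complete_sum S) (Gamma : finType) (n : nat).
Implicit Types A B C : bmat S Gamma n.

Lemma bmat_ext A B : (forall x y, A x y = B x y) -> A = B.
Proof.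
by move=> eq_AB; do 2![apply: functional_extensionality => ?]; apply: eq_AB.
Qed.

Lemma bmulA A B C : bmul cs (bmul cs A B) C = bmul cs A (bmul cs B C).
Proof.
apply: bmat_ext => x z; rewrite /bmul.
under eq_mxcsum => y do rewrite mulmx_mxcsuml.
rewrite exchange_mxcsum; apply: eq_mxcsum => u.
by rewrite mulmx_mxcsumr; apply: eq_mxcsum => y; rewrite mulmxA.
Qed.

Lemma bmul1l A : bmul cs (bone S n) A = A.
Proof.
apply: bmat_ext => x y; rewrite /bmul (mxcsum_supp1 cs (j := x)) => [|u].
  by rewrite /bone eqxx mul1mx.
by rewrite /bone; case: eqP => [-> /(_ erefl) []|_ _]; rewrite mul0mx.
Qed.

Lemma bmul1r A : bmul cs A (bone S n) = A.
Proof.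
apply: bmat_ext => x y; rewrite /bmul (mxcsum_supp1 cs (j := y)) => [|u].
  by rewrite /bone eqxx mulmx1.
by rewrite /bone; case: eqP => [-> /(_ erefl) []|_ _]; rewrite mulmx0.
Qed.

Lemma bpowSl A m : bpow cs A m.+1 = bmul cs A (bpow cs A m).
Proof.
elim: m => [|m IHm]; first by rewrite /= bmul1l bmul1r.
by rewrite -bmulA -IHm.
Qed.

End BlockMatrixAlgebra.

Section PushdownPowers.
Variables (S : pzSemiRingType) (cs : complete_sum S) (Gamma : finType) (n : nat).
Variable M : bmat S Gamma n.
Hypothesis pdM : pushdown_transition_matrix M.

Lemma pushdown_nil_row v : M [::] v = 0.
Proof. by apply: (pdM.2 [::] v).2 => -[p [pi [pi' []]]]. Qed.

Lemma mxcsum_pushdown_cons q r (X : seq Gamma -> 'M[S]_n) :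
  mxcsum cs (fun v => M (q :: r) v *m X v)
  = mxcsum cs (fun a => M [:: q] a *m X (a ++ r)).
Proof.
rewrite (mxcsum_restrict cs (e := fun a => a ++ r)) => [||v not_cat].
- by apply: eq_mxcsum => a; rewrite ((pdM.2 _ _).1 q a r).
- move=> a b ab_r; have size_ab : size a = size b.
    by move/(congr1 size): ab_r; rewrite !size_cat => /addIn.
  by move/eqP: ab_r; rewrite eqseq_cat // => /andP[/eqP].
- rewrite (pdM.2 _ _).2 ?mul0mx // => -[p [pi [pi' [[_ <-] v_cat]]]].
  exact: (not_cat pi).
Qed.

Lemma bpowS_nil m v : bpow cs M m.+1 [::] v = 0.
Proof.
rewrite bpowSl /bmul -(mxcsum0 cs _ (seq Gamma)); apply: eq_mxcsum => u.
by rewrite pushdown_nil_row mul0mx.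
Qed.

Lemma bpowS_cons m q r v :
  bpow cs M m.+1 (q :: r) v = mxcsum cs (fun a => M [:: q] a *m bpow cs M m (a ++ r) v).
Proof. by rewrite bpowSl /bmul mxcsum_pushdown_cons. Qed.

Lemma bpow_cat_nil m w pi :
  bpow cs M m (w ++ pi) [::]
  = cauchy_product cs (fun i => bpow cs M i w [::]) (fun j => bpow cs M j pi [::]) m.
Proof.
elim: m w pi => [|m IHm] [|q w] pi.
- by rewrite cauchy_product0 /= /bone mul1mx.
- by rewrite cauchy_product0 /= /bone mul0mx.
- by rewrite cauchy_productCl ?mul1mx // => i; rewrite bpowS_nil.
- rewrite cauchy_productSl; last by rewrite /= /bone.
  have -> : (fun i => bpow cs M i.+1 (q :: w) [::])
    = (fun i => mxcsum cs (fun a => M [:: q] a *m bpow cs M i (a ++ w) [::])).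
    by apply: functional_extensionality => i; apply: bpowS_cons.
  rewrite cauchy_product_mxcsuml cat_cons bpowS_cons; apply: eq_mxcsum => a.
  by rewrite cauchy_product_mulmxl catA IHm.
Qed.

End PushdownPowers.

Theorem theorem1 (S : pzSemiRingType) (cs : complete_sum S) (n : nat)
  (Gamma : finType) (M : bmat S Gamma n) :
  (0 < n)%N ->
  pushdown_transition_matrix M ->
  forall (p : Gamma) (pi : seq Gamma),
    bstar cs M (p :: pi) [::] = bstar cs M [:: p] [::] *m bstar cs M pi [::].
Proof.
move=> _ pdM p pi; rewrite /bstar -mxcsum_cauchy_product.
by apply: eq_mxcsum => m; rewrite -(bpow_cat_nil cs pdM m [:: p] pi).
Qed.
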